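(* Let $F=(n_F)_{n\ge0}$ be the Fibonacci sequence, $0_F=0$, $1_F=2_F=1$, $(n+2)_F=(n+1)_F+n_F$. Then for all integers $k,n$ with $0\le k<n$, the layer $\langle\Phi_{k+1}\to\Phi_n\rangle$ of the cobweb poset of $F$ (which has $m=n-k$ levels) admits at least one tiling by blocks of type $\sigma P_m$.
   Context: Notation: $n_F\equiv F_n$. For a sequence $F=(n_F)_{n\ge0}$ of nonnegative integers, the cobweb poset of $F$ has, for each $s\ge1$, a level $\Phi_s$ consisting of $s_F$ distinct vertices (levels pairwise disjoint), plus a root level $\Phi_0$ with one vertex; for $x\in\Phi_i$, $y\in\Phi_j$ one has $x<y$ iff $i<j$. For $1\le a\le b$, the layer $\langle\Phi_a\to\Phi_b\rangle$ is the subposet on $\Phi_a\cup\dots\cup\Phi_b$; it has $m=b-a+1$ levels, and its maximal chains are exactly the tuples $(x_a,\dots,x_b)$ with $x_j\in\Phi_j$, i.e. the set $\Phi_a\times\dots\times\Phi_b$. For a permutation $\sigma$ of $\{1,\dots,m\}$, a block of type $\sigma P_m$ in this layer is the subposet induced on $V_a\cup\dots\cup V_b$ where $V_{a-1+i}\subseteq\Phi_{a-1+i}$ and $|V_{a-1+i}|=\sigma(i)_F$ for $i=1,\dots,m$ (a copy of the prime cobweb poset $P_m$, whose levels have sizes $1_F,\dots,m_F$, with its levels permuted by $\sigma$); its maximal chains form the set $V_a\times\dots\times V_b$. A tiling of the layer by blocks of type $\sigma P_m$ is a finite family of such blocks ($\sigma$ may vary from block to block) that are pairwise max-disjoint (no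 two share a maximal chain) and together contain every maximal chain of the layer; equivalently, the sets $V_a\times\dots\times V_b$ of the blocks partition $\Phi_a\times\dots\times\Phi_b$. *)

From Stdlib Require List.
From mathcomp Require Import all_boot all_fingroup.
Set Implicit Arguments. Unset Strict Implicit. Unset Printing Implicit Defensive.

Fixpoint fib (n : nat) : nat :=
  match n with
  | 0 => 0
  | 1 => 1
  | (m.+1 as p).+1 => fib p + fib m
  end.

(* Level s of the cobweb poset of F is 'I_(fib s).
   The layer <Phi_{k+1} -> Phi_{k+m}> has m levels; its level with 0-based
   index i : 'I_m is Phi_{k+1+i}.  A maximal chain of the layer is a choice
   of one vertex in each of its levels. *)
Definition chain (k m : nat) := {dffun forall i : 'I_m, 'I_(fib (k.+1 + i))}.

Record block (k m : nat) := Block {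
  bperm : {perm 'I_m};
  bsets : forall i : 'I_m, {set 'I_(fib (k.+1 + i))}
}.

(* Block of type sigma P_m: |V_{a-1+i}| = sigma(i)_F (1-based), i.e. with
   0-based index i, |V_i| = fib (sigma i + 1). *)
Definition block_of_type (k m : nat) (B : block k m) : Prop :=
  forall i : 'I_m, #|bsets B i| = fib (bperm B i).+1.

Definition block_chains (k m : nat) (B : block k m) : {set chain k m} :=
  [set c : chain k m | [forall i, c i \in bsets B i]].

Definition is_tiling (k m : nat) (T : seq (block k m)) : Prop :=
  [/\ (forall B, Stdlib.Lists.List.In B T -> block_of_type B),
      pairwise (fun B1 B2 => [disjoint block_chains B1 & block_chains B2]) T
    & forall c : chain k m, exists2 B, Stdlib.Lists.List.In B T & c \in block_chains B].

From mathcomp Require Import all_boot all_fingroup zify.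
From Stdlib Require List.

Set Implicit Arguments.
Unset Strict Implicit.
Unset Printing Implicit Defensive.

(* A maximal chain of the layer is a lattice point of the box
   D(k, m) = [0, F_(k+1)) x ... x [0, F_(k+m)).  A block whose level sets are
   integer intervals is a sub-box, and it has type sigma P_m when its side
   along coordinate i is F_(sigma(i)+1).  So it suffices to tile D(k, m) by
   such "tiles", i.e. to cover each lattice point exactly once.

   The box D(0, m) is a tile;
   D(k+1, m+1) is obtained by the Fibonacci addition formula
   F_(k+m+2) = F_(k+2) F_(m+1) + F_m F_(k+1) from D(k+1, m) and D(k, m+1),
   by induction on m and k.  Finally each tile is turned into a block of the
   layer, and exact covering of lattice points gives both the max-disjointness
   and the covering conditions of a tiling. *)

(* Counting over lists of an arbitrary type, with list membership [List.In];
   tiles and blocks carry functions, so they have no decidable equality. *)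
Section CountIn.
Variable A : Type.

Lemma count_gt0_In (p : pred A) (s : seq A) :
  0 < count p s -> exists2 t, List.In t s & p t.
Proof. by rewrite -has_count => /List.existsb_exists[t []]; exists t. Qed.

Lemma In_count_gt0 (p : pred A) (s : seq A) (t : A) :
  List.In t s -> p t -> 0 < count p s.
Proof. by move=> t_in pt; rewrite -has_count; apply/List.existsb_exists; exists t. Qed.

Lemma count_eq0_In (p : pred A) (s : seq A) :
  (forall t, List.In t s -> ~~ p t) -> count p s = 0.
Proof.
move=> none; apply/eqP; rewrite -leqn0 leqNgt.
by apply/negP => /count_gt0_In[t /none/negP].
Qed.

Lemma count_le1_pairwise (X : finType) (blk : A -> {set X}) (s : seq A) :
  (forall x, count (fun b => x \in blk b) s <= 1) ->
  pairwise (fun a b => [disjoint blk a & blk b]) s.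
Proof.
elim: s => //= a s IH cnt; apply/andP; split.
  apply/List.forallb_forall => b b_in.
  rewrite disjoint_subset; apply/subsetP => x xa; apply/negP => xb.
  have := cnt x; rewrite /= xa add1n ltnS leqn0 => /eqP cnt0.
  by have := In_count_gt0 (p := fun b => x \in blk b) b_in xb; rewrite cnt0.
by apply: IH => x; apply: leq_trans (cnt x); apply: leq_addl.
Qed.

End CountIn.

(* The Fibonacci addition formula F_(a+b+1) = F_(a+1) F_(b+1) + F_a F_b; it
   is what lets the longest side of a layer box be cut into two slabs. *)
Lemma fib_add a b : fib (a + b).+1 = fib a.+1 * fib b.+1 + fib a * fib b.
Proof.
elim: a b => [|a IH] b; first by rewrite add0n mul1n mul0n addn0.
rewrite addSnnS IH.
change (fib b.+2) with (fib b.+1 + fib b); change (fib a.+2) with (fib a.+1 + fib a).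
lia.
Qed.

Arguments fib : simpl never.

(* A tile in a box of dimension m: coordinate i has type [ttype t i] (a level
   of the prime poset P_m, 0-based) and covers the integer interval
   [toff t i, toff t i + F_(ttype t i + 1)). *)
Record tile := Tile { ttype : nat -> nat; toff : nat -> nat }.

Definition side (t : tile) (i : nat) : nat := fib (ttype t i).+1.

Definition upd (d : nat -> nat) (j a : nat) : nat -> nat :=
  fun i => if i == j then a else d i.

Definition in_tile (m : nat) (x : nat -> nat) (t : tile) : bool :=
  all (fun i => toff t i <= x i < toff t i + side t i) (iota 0 m).

Definition tile_fits (m : nat) (d : nat -> nat) (t : tile) : Prop :=
  [/\ forall i, i < m -> ttype t i < m,
      forall i j, i < m -> j < m -> ttype t i = ttype t j -> i = j
    & forall i, i < m -> toff t i + side t i <= d i].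

Definition in_box (m : nat) (d x : nat -> nat) : Prop :=
  forall i, i < m -> x i < d i.

Definition tiling (m : nat) (d : nat -> nat) (T : seq tile) : Prop :=
  (forall t, List.In t T -> tile_fits m d t) /\
  (forall x, in_box m d x -> count (in_tile m x) T = 1).

Lemma in_tileP m x t :
  reflect (forall i, i < m -> toff t i <= x i < toff t i + side t i) (in_tile m x t).
Proof.
apply: (iffP allP) => inside i lt_im; apply: inside; first by rewrite mem_iota.
by move: lt_im; rewrite mem_iota.
Qed.

Section BoxTilings.
Variable m : nat.

Lemma tiling_eq_box d d' T :
  (forall i, i < m -> d i = d' i) -> tiling m d T -> tiling m d' T.
Proof.
move=> eq_d [fit cover]; split.
  by move=> t /fit[range inj inside]; split=> // i lt_im; rewrite -eq_d ?inside.
by move=> x x_in; apply: cover => i lt_im; rewrite eq_d ?x_in.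
Qed.

Lemma tiling_standard :
  tiling m (fun i => fib i.+1) [:: Tile id (fun=> 0)].
Proof.
split; first by move=> t [<-|[]]; split.
move=> x x_in /=; rewrite addn0; apply/eqP; rewrite eqb1.
by apply/in_tileP => i /x_in.
Qed.

Definition shift_tile (j a : nat) (t : tile) : tile :=
  Tile (ttype t) (upd (toff t) j (toff t j + a)).

Lemma tiling_split j d1 d2 T1 T2 : j < m ->
  (forall i, i < m -> i != j -> d1 i = d2 i) ->
  tiling m d1 T1 -> tiling m d2 T2 ->
  tiling m (upd d1 j (d1 j + d2 j)) (T1 ++ map (shift_tile j (d1 j)) T2).
Proof.
rewrite /shift_tile /upd => lt_jm eq_d [fit1 cover1] [fit2 cover2]; split.
  move=> t /List.in_app_iff[/fit1[range inj inside] | /List.in_map_iff[t2 [<- /fit2]]].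
    by split=> // i /inside; case: ifP => [/eqP -> | _] //; lia.
  case=> range inj inside; split=> // i lt_im; have := inside i lt_im.
  by rewrite /side /=; case: ifP => [/eqP -> | /negbT ne_ij]; [lia | rewrite eq_d].
move=> x x_in; rewrite count_cat count_map /=.
have [low | high] := ltnP (x j) (d1 j).
  rewrite cover1; last by move=> i /[dup] /x_in; case: ifP => [/eqP -> | _].
  rewrite count_eq0_In // => t _; apply/in_tileP => /(_ j lt_jm) /=.
  rewrite eqxx; lia.
rewrite count_eq0_In ?add0n => [|t /fit1[_ _ inside]]; last first.
  by apply/in_tileP => /(_ j lt_jm); have := inside j lt_jm; lia.
rewrite -(cover2 (upd x j (x j - d1 j))); last first.
  move=> i lt_im; have := x_in i lt_im; rewrite /upd.
  by case: ifP => [/eqP -> | /negbT /(eq_d i lt_im) <-]; lia.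
apply: eq_count => t /=; apply/in_tileP/in_tileP => inside i /[dup] lt_im /inside;
  rewrite /upd /side /=; case: ifP => [/eqP -> | _] //; lia.
Qed.

Lemma tiling_repeat j d T (c : nat) : j < m -> tiling m d T ->
  exists T', tiling m (upd d j (c * d j)) T'.
Proof.
move=> lt_jm tiled; elim: c => [|c [T' tiled']].
  by exists [::]; split=> // x /(_ j lt_jm); rewrite /upd eqxx mul0n.
have agree i : i < m -> i != j -> d i = upd d j (c * d j) i.
  by move=> _ /negbTE ne_ij; rewrite /upd ne_ij.
eexists; apply: tiling_eq_box (tiling_split lt_jm agree tiled tiled') => i _.
by rewrite /upd; case: ifP; rewrite ?eqxx ?mulSn.
Qed.

Definition reindex_tile (f : nat -> nat) (t : tile) : tile :=
  Tile (ttype t \o f) (toff t \o f).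

Lemma tiling_reindex f g d T :
  (forall i, i < m -> f i < m) -> (forall i, i < m -> g i < m) ->
  (forall i, i < m -> f (g i) = i) -> (forall i, i < m -> g (f i) = i) ->
  tiling m d T -> tiling m (d \o f) (map (reindex_tile f) T).
Proof.
move=> f_lt g_lt fK gK [fit cover]; split.
  move=> _ /List.in_map_iff[t [<- /fit[range inj inside]]]; split=> /=.
  - by move=> i /f_lt /range.
  - by move=> i1 i2 lt1 lt2 /(inj _ _ (f_lt _ lt1) (f_lt _ lt2)) /(congr1 g); rewrite !gK.
  - by move=> i /f_lt /inside.
move=> x x_in; rewrite count_map -(cover (x \o g)); last first.
  by move=> i lt_im /=; rewrite -{2}(fK i lt_im); apply/x_in/g_lt.
apply: eq_count => t /=; apply/in_tileP/in_tileP => inside i lt_im.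
  by have := inside (g i) (g_lt i lt_im); rewrite /side /= fK.
by have := inside (f i) (f_lt i lt_im); rewrite /side /= gK.
Qed.
End BoxTilings.

Definition extend_tile (m : nat) (t : tile) : tile :=
  Tile (upd (ttype t) m m) (upd (toff t) m 0).

Lemma ltnS_lastP m i : i < m.+1 -> i = m \/ i < m.
Proof. by rewrite ltnS leq_eqVlt => /predU1P. Qed.

Lemma tiling_extend m d T : tiling m d T ->
  tiling m.+1 (upd d m (fib m.+1)) (map (extend_tile m) T).
Proof.
move=> [fit cover]; split.
  move=> _ /List.in_map_iff[t [<- /fit[range inj inside]]].
  split=> /= [i | i1 i2 | i]; rewrite /side /= /upd.
  - case/ltnS_lastP=> [-> | lt_im]; first by rewrite eqxx.
    by rewrite (ltn_eqF lt_im); apply/ltnW/range.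
  - case/ltnS_lastP=> [-> | lt1] /ltnS_lastP[-> | lt2];
      rewrite ?eqxx ?(ltn_eqF lt1) ?(ltn_eqF lt2) //.
    + by move=> eq_m; have := range _ lt2; rewrite -eq_m ltnn.
    + by move=> eq_m; have := range _ lt1; rewrite eq_m ltnn.
    + exact: inj.
  - by case/ltnS_lastP=> [-> | lt_im]; rewrite ?eqxx // (ltn_eqF lt_im) inside.
move=> x x_in; rewrite count_map -(cover x); last first.
  by move=> i lt_im; have := x_in i (ltnW lt_im); rewrite /upd (ltn_eqF lt_im).
apply: eq_count => t /=; apply/in_tileP/in_tileP => inside i lt_im.
  by have := inside i (ltnW lt_im); rewrite /side /= /upd (ltn_eqF lt_im).
move: (x_in i lt_im); rewrite /side /= /upd.
by case/ltnS_lastP: lt_im => [-> | lt_im]; rewrite ?eqxx // (ltn_eqF lt_im) inside.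
Qed.

(* The box (F_(k+1), ..., F_(k+m)) of maximal chains of the layer
   <Phi_(k+1) -> Phi_(k+m)>. *)
Definition layer_box (k : nat) : nat -> nat := fun i => fib (k.+1 + i).

(* The cyclic rotation of 0..m sending i to i+1 and m to 0, and its inverse;
   reindexing by [rot_down m] moves coordinate 0 to the last position. *)
Definition rot_down (m i : nat) : nat := if i < m then i.+1 else 0.
Definition rot_up (m i : nat) : nat := if i == 0 then m else i.-1.

Lemma rot_down_lt m i : i < m.+1 -> rot_down m i < m.+1.
Proof. by rewrite /rot_down; case: ifP. Qed.

Lemma rot_up_lt m i : i < m.+1 -> rot_up m i < m.+1.
Proof. rewrite /rot_up; case: ifP => // _; lia. Qed.

Lemma rot_downK m i : i < m.+1 -> rot_down m (rot_up m i) = i.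
Proof. by rewrite /rot_up /rot_down; case: i => [|i] /=; rewrite ?ltnn // ltnS => ->. Qed.

Lemma rot_upK m i : i < m.+1 -> rot_up m (rot_down m i) = i.
Proof. by rewrite /rot_down /rot_up; case: (ltnP i m) => //= ge_im lt_im; lia. Qed.

(* For D(k+1, m+1), the
   last side F_(k+m+2) = F_(k+2) F_(m+1) + F_m F_(k+1) is cut into a slab of
   F_(k+2) copies of D(k+1, m) x [0, F_(m+1)) and a slab of F_m copies of
   D(k, m+1) along its first side, that side being rotated to the end. *)
Lemma layer_box_tiling m k : exists T, tiling m (layer_box k) T.
Proof.
elim: m k => [|m IHm] k.
  by exists [:: Tile id (fun=> 0)]; apply: tiling_eq_box (tiling_standard _).
elim: k => [|k IHk].
  exists [:: Tile id (fun=> 0)]; apply: tiling_eq_box (tiling_standard _) => i _.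
  by rewrite /layer_box add1n.
have [T1 tiled1] := IHm k.+1.
have [T1' slab1] := tiling_repeat (fib k.+2) (ltnSn m) (tiling_extend tiled1).
have [T2 tiled2] := IHk.
have [T2' tiled2'] := tiling_repeat (fib m) (ltn0Sn m) tiled2.
have slab2 := tiling_reindex (@rot_down_lt m) (@rot_up_lt m)
  (@rot_downK m) (@rot_upK m) tiled2'.
eexists; apply: tiling_eq_box (tiling_split (ltnSn m) _ slab1 slab2).
  (* the stacked box is D(k+1, m+1) *)
  move=> i; rewrite /upd /rot_down /layer_box /=.
  case/ltnS_lastP=> [-> | lt_im]; rewrite ?eqxx ?(ltn_eqF lt_im) ?ltnn //=.
  by rewrite addn0 addSn fib_add [fib m * _]mulnC.
(* the two slabs agree off the last coordinate *)
move=> i lt_i ne_im.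
have lt_im : i < m by case/ltnS_lastP: lt_i ne_im => [->|]; rewrite ?eqxx.
by rewrite /upd /rot_down /layer_box /= (negbTE ne_im) lt_im addSnnS.
Qed.

(* The permutation given by [f] when [f] is injective (identity otherwise). *)
Definition perm_of_fun (m : nat) (f : 'I_m -> 'I_m) : {perm 'I_m} :=
  insubd (1%g : {perm 'I_m}) [ffun i => f i].

Lemma perm_of_funE m (f : 'I_m -> 'I_m) : injective f -> perm_of_fun f =1 f.
Proof. by move=> f_inj i; rewrite -pvalE val_insubd perm_proof // ffunE. Qed.

Lemma card_interval N lo L : lo + L <= N ->
  #|[set j : 'I_N | lo <= j < lo + L]| = L.
Proof.
move=> fitN.
have shift_lt (i : 'I_L) : lo + i < N by apply: leq_trans fitN; rewrite ltn_add2l.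
pose shift (i : 'I_L) := Ordinal (shift_lt i).
have shift_inj : injective shift.
  by move=> i1 i2 [] /eqP; rewrite eqn_add2l => /eqP /val_inj.
rewrite -[RHS]card_ord -cardsT -(card_imset _ shift_inj); apply: eq_card => j.
rewrite inE; apply/idP/imsetP => [/andP[lo_j j_hi] | [i _ ->]] /=.
  have lt_jL : j - lo < L by lia.
  by exists (Ordinal lt_jL); rewrite ?inE //; apply: val_inj; rewrite /= subnKC.
by rewrite leq_addr ltn_add2l ltn_ord.
Qed.

Section LayerBlocks.
Variables k m : nat.

Definition chain_point (c : chain k m) : nat -> nat :=
  fun i => if insub i is Some i' then val (c i') else 0.

Lemma chain_pointE (c : chain k m) (i : 'I_m) : chain_point c i = c i.
Proof. by rewrite /chain_point valK. Qed.

Lemma chain_point_in_box (c : chain k m) : in_box m (layer_box k) (chain_point c).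
Proof. by move=> i lt_im; rewrite (chain_pointE c (Ordinal lt_im)). Qed.

Definition block_of_tile (t : tile) : block k m :=
  Block (perm_of_fun (fun i : 'I_m => insubd i (ttype t i)))
        (fun i => [set j : 'I_(fib (k.+1 + i)) | toff t i <= j < toff t i + side t i]).

Lemma mem_block_of_tile (c : chain k m) (t : tile) :
  (c \in block_chains (block_of_tile t)) = in_tile m (chain_point c) t.
Proof.
rewrite inE; apply/forallP/in_tileP => [inside i lt_im | inside i].
  by have := inside (Ordinal lt_im); rewrite inE -chain_pointE.
by rewrite inE -chain_pointE; apply: inside.
Qed.

Lemma block_of_tile_type (t : tile) :
  tile_fits m (layer_box k) t -> block_of_type (block_of_tile t).
Proof.
move=> [range inj inside] i /=.
have type_inj : injective (fun i : 'I_m => insubd i (ttype t i) : 'I_m).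
  move=> i1 i2 /(congr1 val); rewrite !val_insubd !range //.
  by move/inj => eq_i; apply/val_inj/eq_i.
by rewrite perm_of_funE // val_insubd range // card_interval ?inside.
Qed.
End LayerBlocks.

Theorem theorem2 (k n : nat) :
  k < n -> exists T : seq (block k (n - k)), is_tiling T.
Proof.
move=> _; set m := n - k.
have [T [T_fit T_exact]] := layer_box_tiling m k.
have exact_cover (c : chain k m) :
    count (fun B => c \in block_chains B) (map (block_of_tile k m) T) = 1.
  by rewrite count_map (eq_count (mem_block_of_tile c)); apply/T_exact/chain_point_in_box.
exists (map (block_of_tile k m) T); split.
- by move=> _ /List.in_map_iff[t [<- /T_fit]]; apply: block_of_tile_type.
- by apply: count_le1_pairwise => c; rewrite exact_cover.
- by move=> c; apply: count_gt0_In; rewrite exact_cover.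
Qed.
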